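(* Fix $x_{\rm A}>0$ and let $v_E=\sqrt{2/x_{\rm A}}$. There exists $\delta>0$ such that for every $x_{\rm B}\in\,]x_{\rm A}-\delta,x_{\rm A}[$ (with $x_{\rm B}>0$), the function $T_I^R:\,]-\infty,v_E[\,\to\,]0,\infty[$ is not convex; more precisely ${\rm d}^2T_I^R/{\rm d}v_{\rm A}^2<0$ at $v_{\rm A}=0$.
   Context: Kepler problem on a line normalized as $\ddot x=-1/x^2$ ($x>0$), with motions extended after collision with ${\rm O}$ ($x=0$): the body bounces back with the same energy $H=\dot x^2/2-1/x$. For $0<x_{\rm B}<x_{\rm A}$ and $v_{\rm A}<v_E$, $T_I^R(v_{\rm A})$ is the time elapsed from $t_{\rm A}$ until the first arrival at $x_{\rm B}$ after the first collision with ${\rm O}$, for the solution with $x(t_{\rm A})=x_{\rm A}$, $\dot x(t_{\rm A})=v_{\rm A}$ (the simple indirect rectilinear arc from ${\rm A}$ to ${\rm B}$). *)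

From Stdlib Require Import Reals Lra.
Open Scope R_scope.

(* Normalized rectilinear Kepler problem  x'' = -1/x^2  (x > 0),
   energy  H = x'^2/2 - 1/x, motions extended after collision with O
   by elastic bounce (same energy).  *)

Definition energy (x v : R) : R := v ^ 2 / 2 - 1 / x.

Definition v_escape (x : R) : R := sqrt (2 / x).

(* t_out H x : time needed by a solution of energy H to travel outward
   from the collision O (x = 0) to the distance x > 0 (requires
   H + 1/x >= 0, i.e. x below the apocenter when H < 0).  This is the
   classical explicit solution of the radial Kepler problem:
   - H < 0, a = -1/(2H):  x = a (1 - cos E),  t = a^(3/2) (E - sin E), E in [0,pi];
   - H = 0:               t = (sqrt 2 / 3) x^(3/2);
   - H > 0, a = 1/(2H):   x = a (cosh F - 1), t = a^(3/2) (sinh F - F), F >= 0.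
   Equivalently t_out H x = \int_0^x dr / sqrt (2 (H + 1/r)). *)
Definition t_out (H x : R) : R :=
  match Rlt_dec H 0 with
  | left _ =>
      let a := - / (2 * H) in
      let E := acos (1 - x / a) in
      a * sqrt a * (E - sin E)
  | right _ =>
      match Req_EM_T H 0 with
      | left _ => sqrt 2 / 3 * (x * sqrt x)
      | right _ =>
          let a := / (2 * H) in
          let c := 1 + x / a in
          let F := ln (c + sqrt (c ^ 2 - 1)) in
          a * sqrt a * (sinh F - F)
      end
  end.

(* T_I^R(vA): time elapsed from t_A until the first arrival at x_B after
   the first collision with O, for the solution with x(t_A) = xA,
   x'(t_A) = vA, where 0 < xB < xA and vA < v_escape xA.
   - vA <= 0: the body falls directly to O (time t_out H xA), bounces and
     reaches xB (time t_out H xB);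
   - vA > 0 (so H < 0): the body first climbs to the apocenter
     x_max = -1/H (time t_out H x_max - t_out H xA), falls to O
     (time t_out H x_max), bounces and reaches xB (time t_out H xB). *)
Definition T_IR (xA xB vA : R) : R :=
  let H := energy xA vA in
  match Rle_dec vA 0 with
  | left _ => t_out H xA + t_out H xB
  | right _ => 2 * t_out H (- / H) - t_out H xA + t_out H xB
  end.

From Stdlib Require Import Reals Lra.
From Coquelicot Require Import Coquelicot.
Open Scope R_scope.

(* On bound orbits put sigma = 2/xA - vA^2 = 1/a.  Kepler's equation gives
   T_I^R(vA) = sigma^(-3/2) tau(vA), tau(vA) = PI + beta(vA) + K(1 - xB sigma),
   where K(y) = E - sin E for cos E = y ([kepler_time]) and beta ([odd_time])
   is odd and analytic: the two branches of the definition (falling directly,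
   or first climbing to the apocentre) glue into one smooth function.  At
   vA = 0 its second derivative is sigma^(-3/2) (3 tau / sigma + 2 xB
   K'(1 - xB sigma)) with tau <= 2 PI, and K'(y) -> -oo as y -> -1, which is
   where 1 - xB sigma tends as xB -> xA.  A convex function has a
   nondecreasing derivative, hence no negative second derivative. *)

Definition convex_on_lt (f : R -> R) (c : R) : Prop :=
  forall v1 v2 s : R, v1 < c -> v2 < c -> 0 <= s <= 1 ->
    f (s * v1 + (1 - s) * v2) <= s * f v1 + (1 - s) * f v2.

Lemma derivative_le_of_quotient_le (phi : R -> R) (x L M eps : R) :
  0 < eps -> derivable_pt_lim phi x L ->
  (forall t, 0 < t < eps -> (phi (x + t) - phi x) / t <= M) -> L <= M.
Proof.
intros Heps Hd Hq. apply Rnot_lt_le. intros HML.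
destruct (Hd (L - M)) as [d Hd']; [lra|].
pose proof (cond_pos d) as Hd0.
set (t := Rmin eps d / 2).
assert (Ht : 0 < t < eps /\ t < d).
{ pose proof (Rmin_l eps d). pose proof (Rmin_r eps d).
  pose proof (Rmin_glb_lt eps d 0 Heps Hd0). unfold t. lra. }
assert (Hnear := Hd' t ltac:(lra) ltac:(rewrite Rabs_pos_eq; lra)).
apply Rabs_def2 in Hnear. specialize (Hq t (proj1 Ht)). lra.
Qed.

Lemma convex_above_tangent (f : R -> R) (c p z l : R) :
  convex_on_lt f c -> p < c -> z < c -> derivable_pt_lim f p l ->
  f p + l * (z - p) <= f z.
Proof.
intros Hconv Hp Hz Hd.
set (phi t := f (p + t * (z - p))).
assert (Hphi : derivable_pt_lim phi 0 (l * (z - p))).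
{ apply is_derive_Reals. rewrite Rmult_comm.
  apply (is_derive_comp f (fun t => p + t * (z - p))).
  - rewrite Rmult_0_l, Rplus_0_r. now apply is_derive_Reals.
  - auto_derive; [easy | ring]. }
assert (Hq : forall t, 0 < t < 1 -> (phi (0 + t) - phi 0) / t <= f z - f p).
{ intros t Ht. apply Rle_div_l; [lra|].
  specialize (Hconv z p t Hz Hp ltac:(lra)).
  unfold phi. rewrite Rplus_0_l, Rmult_0_l, Rplus_0_r.
  replace (p + t * (z - p)) with (t * z + (1 - t) * p) by ring. lra. }
pose proof (derivative_le_of_quotient_le phi 0 _ _ 1 Rlt_0_1 Hphi Hq). lra.
Qed.

Lemma convex_derivative_le (f : R -> R) (c p q lp lq : R) :
  convex_on_lt f c -> p < q < c ->
  derivable_pt_lim f p lp -> derivable_pt_lim f q lq -> lp <= lq.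
Proof.
intros Hconv Hpq Hp Hq.
pose proof (convex_above_tangent f c p q lp Hconv ltac:(lra) ltac:(lra) Hp).
pose proof (convex_above_tangent f c q p lq Hconv ltac:(lra) ltac:(lra) Hq).
nra.
Qed.

Lemma not_convex_of_second_derivative_neg (f d1 : R -> R) (c x eps d2 : R) :
  0 < eps ->
  (forall v, x <= v < x + eps -> v < c /\ derivable_pt_lim f v (d1 v)) ->
  derivable_pt_lim d1 x d2 -> d2 < 0 -> ~ convex_on_lt f c.
Proof.
intros Heps Hf Hd2 Hneg Hconv.
assert (Hmono : forall t, 0 < t < eps -> ((- d1)%F (x + t) - (- d1)%F x) / t <= 0).
{ intros t Ht. apply Rle_div_l; [lra|].
  destruct (Hf x) as [Hxc Hx]; [lra|]. destruct (Hf (x + t)) as [Htc Hxt]; [lra|].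
  pose proof (convex_derivative_le f c x (x + t) _ _ Hconv ltac:(lra) Hx Hxt).
  unfold opp_fct. lra. }
pose proof (derivative_le_of_quotient_le _ x _ _ eps Heps
  (derivable_pt_lim_opp d1 x d2 Hd2) Hmono).
lra.
Qed.

Lemma locally_interval (a b y : R) (P : R -> Prop) :
  a < y < b -> (forall t, a < t < b -> P t) -> locally y P.
Proof.
intros Hy HP. apply (filter_imp (fun t => a < t /\ t < b)); [intros t Ht; now apply HP|].
now apply (open_and _ _ (open_gt a) (open_lt b)).
Qed.

(* [E - sin E] for the eccentric anomaly [E] with [cos E = y] *)
Definition kepler_time (y : R) : R := acos y - sin (acos y).

Definition kepler_time' (y : R) : R := - (1 - y) / sqrt (1 - y²).

(* [a ^ (3/2)] for [s = 1/a] *)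
Definition kepler_scale (s : R) : R := / (s * sqrt s).

Lemma t_out_neg_energy (H x : R) :
  H < 0 -> t_out H x = kepler_scale (-2 * H) * kepler_time (1 - x * (-2 * H)).
Proof.
intros HH. unfold t_out. destruct (Rlt_dec H 0) as [_|]; [|lra]. cbv zeta.
replace (- / (2 * H)) with (/ (-2 * H)) by (field; lra).
unfold kepler_scale, kepler_time. rewrite sqrt_inv, <- Rinv_mult.
replace (x / / (-2 * H)) with (x * (-2 * H)) by (field; lra).
reflexivity.
Qed.

Lemma kepler_time_m1 : kepler_time (-1) = PI.
Proof.
unfold kepler_time. replace (-1) with (- (1)) by ring.
rewrite acos_opp, acos_1, Rminus_0_r, sin_PI. ring.
Qed.

Lemma kepler_time_opp (m : R) : 0 < m <= 1 ->
  kepler_time (- m) = PI - (atan (sqrt (1 - m²) / m) + sqrt (1 - m²)).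
Proof.
intros Hm. unfold kepler_time.
rewrite acos_opp, sin_PI_x, sin_acos, acos_atan by lra. ring.
Qed.

Lemma kepler_time_le_PI (y : R) : -1 <= y <= 1 -> kepler_time y <= PI.
Proof.
intros Hy. unfold kepler_time. rewrite sin_acos by lra.
pose proof (acos_bound y). pose proof (sqrt_pos (1 - y²)). lra.
Qed.

Lemma is_derive_acos (y : R) : -1 < y < 1 -> is_derive acos y (-1 / sqrt (1 - y²)).
Proof.
intros Hy. apply is_derive_Reals. rewrite <- (derive_pt_acos y Hy).
exact (proj2_sig (derivable_pt_acos y Hy)).
Qed.

Lemma is_derive_kepler_time (y : R) : -1 < y < 1 -> is_derive kepler_time y (kepler_time' y).
Proof.
intros Hy.
assert (Hp : 0 < 1 - y²) by (unfold Rsqr; nra).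
assert (Hq : 0 < sqrt (1 - y²)) by (now apply sqrt_lt_R0).
apply is_derive_ext_loc with (fun t => acos t - sqrt (1 - t²)).
- apply (locally_interval (-1) 1); [lra|]. intros t Ht.
  unfold kepler_time. rewrite sin_acos by lra. reflexivity.
- unfold kepler_time', Rsqr in *. auto_derive.
  + split; [eexists; now apply is_derive_acos | lra].
  + replace (Derive (fun t => acos t) y) with (-1 / sqrt (1 - y * y))
      by (symmetry; apply is_derive_unique; now apply is_derive_acos).
    unfold Rminus in *. field. lra.
Qed.

Lemma is_derive_kepler_scale (s : R) :
  0 < s -> is_derive kepler_scale s (- (3 / 2) * kepler_scale s / s).
Proof.
intros Hs. unfold kepler_scale.
assert (Hq : sqrt s * sqrt s = s) by (apply sqrt_sqrt; lra).
assert (0 < sqrt s) by (now apply sqrt_lt_R0).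
auto_derive.
- repeat split; nra.
- set (q := sqrt s) in *. rewrite <- Hq. field. lra.
Qed.

Section Kepler.

Variable xA : R.
Hypothesis hxA : 0 < xA.

(* [1/a] for the orbit through [xA] with squared speed [u] *)
Definition sigma (u : R) : R := 2 / xA - u.

Lemma sigma_energy (v : R) : -2 * energy xA v = sigma (v ^ 2).
Proof. unfold energy, sigma. field. lra. Qed.

Lemma sigma_pos (v : R) : xA * v ^ 2 < 1 -> 0 < sigma (v ^ 2).
Proof.
intros Hv. unfold sigma. apply (Rmult_lt_reg_l xA); [lra|].
field_simplify; lra.
Qed.

Lemma small_speed (v : R) : Rabs v < / (1 + xA) -> xA * v ^ 2 < 1.
Proof.
intros Hv.
assert (Hv' : Rabs v * (1 + xA) < 1).
{ apply (Rmult_lt_compat_r (1 + xA)) in Hv; [|lra]. now rewrite Rinv_l in Hv by lra. }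
rewrite <- pow2_abs. pose proof (Rabs_pos v). nra.
Qed.

Lemma lt_v_escape (v : R) : 0 <= v -> xA * v ^ 2 < 1 -> v < v_escape xA.
Proof.
intros Hv0 Hv. unfold v_escape. rewrite <- (sqrt_pow2 v Hv0).
apply sqrt_lt_1_alt. split; [apply pow2_ge_0|].
apply (Rmult_lt_reg_l xA); [lra|]. field_simplify; lra.
Qed.

(* Cosine and sine of [PI - E], [E] the eccentric anomaly at [xA]; the sine
   carries the sign of [v], which makes [odd_time] analytic through [v = 0]. *)
Definition cosA (v : R) : R := 1 - xA * v ^ 2.

Definition sinA (v : R) : R := v * xA * sqrt (sigma (v ^ 2)).

Lemma sqrt_one_minus_cosA_sqr (v : R) : xA * v ^ 2 < 1 -> sqrt (1 - (cosA v)²) = Rabs (sinA v).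
Proof.
intros Hv. pose proof (sigma_pos v Hv) as Hs.
rewrite <- sqrt_Rsqr_abs. f_equal. unfold Rsqr, sinA.
replace (v * xA * sqrt (sigma (v ^ 2)) * (v * xA * sqrt (sigma (v ^ 2))))
  with ((v * xA) * (v * xA) * (sqrt (sigma (v ^ 2)) * sqrt (sigma (v ^ 2)))) by ring.
rewrite sqrt_sqrt by lra. unfold cosA, sigma. field. lra.
Qed.

Definition odd_time (v : R) : R := atan (sinA v / cosA v) + sinA v.

Lemma odd_time_0 : odd_time 0 = 0.
Proof. unfold odd_time, sinA. rewrite !Rmult_0_l, Rdiv_0_l, atan_0. ring. Qed.

Lemma is_derive_odd_time (v : R) :
  xA * v ^ 2 < 1 -> is_derive odd_time v (2 * xA * sqrt (sigma (v ^ 2))).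
Proof.
intros Hv. pose proof (sigma_pos v Hv) as Hs.
assert (Hq : sqrt (sigma (v ^ 2)) * sqrt (sigma (v ^ 2)) = sigma (v ^ 2)) by (apply sqrt_sqrt; lra).
assert (0 < sqrt (sigma (v ^ 2))) by (apply sqrt_lt_R0; lra).
unfold odd_time, sinA, cosA. unfold sigma in *.
auto_derive.
- repeat split; lra.
- set (q := sqrt _) in *.
  assert (HxA : xA = 2 / (q * q + v * v)) by (rewrite Hq; field; lra).
  assert (Hm : v * v < q * q).
  { rewrite Hq. apply (Rmult_lt_reg_l xA); [lra|]. field_simplify; lra. }
  (* eliminating [xA] through [q^2 + v^2 = 2/xA] makes the identity rational *)
  rewrite HxA. field. repeat split; nra.
Qed.

Section Arrival.

Variable xB : R.

Definition reduced_time (v : R) : R :=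
  PI + odd_time v + kepler_time (1 - xB * sigma (v ^ 2)).

Definition T_smooth (v : R) : R := kepler_scale (sigma (v ^ 2)) * reduced_time v.

Lemma T_IR_eq_T_smooth (v : R) : xA * v ^ 2 < 1 -> T_IR xA xB v = T_smooth v.
Proof.
intros Hv. pose proof (sigma_pos v Hv) as Hs.
assert (HH : energy xA v < 0) by (pose proof (sigma_energy v); lra).
assert (HcosA : 0 < cosA v <= 1) by (unfold cosA; pose proof (pow2_ge_0 v); nra).
assert (HsinA : sinA v = v * (xA * sqrt (sigma (v ^ 2)))) by (unfold sinA; ring).
assert (Hk : 0 <= xA * sqrt (sigma (v ^ 2))) by (pose proof (sqrt_pos (sigma (v ^ 2))); nra).
assert (HA : 1 - xA * sigma (v ^ 2) = - cosA v) by (unfold cosA, sigma; field; lra).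
unfold T_IR, T_smooth, reduced_time, odd_time. cbv zeta.
destruct (Rle_dec v 0) as [Hle|Hgt].
- rewrite !t_out_neg_energy, sigma_energy, HA, kepler_time_opp, sqrt_one_minus_cosA_sqr by lra.
  rewrite Rabs_left1 by nra.
  replace (- sinA v / cosA v) with (- (sinA v / cosA v)) by (field; lra).
  rewrite atan_opp. ring.
- rewrite !t_out_neg_energy by lra.
  replace (1 - - / energy xA v * (-2 * energy xA v)) with (-1) by (field; lra).
  rewrite kepler_time_m1, sigma_energy, HA, kepler_time_opp, sqrt_one_minus_cosA_sqr by lra.
  rewrite Rabs_pos_eq by nra. ring.
Qed.

Hypothesis hxB : 0 < xB < xA.

Lemma cos_anomaly_B_bounds (v : R) : xA * v ^ 2 < 1 -> -1 < 1 - xB * sigma (v ^ 2) < 1.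
Proof.
intros Hv. pose proof (sigma_pos v Hv) as Hs.
assert (HB : xB * sigma (v ^ 2) <= xB * (2 / xA)).
{ apply Rmult_le_compat_l; [lra|]. unfold sigma. pose proof (pow2_ge_0 v). lra. }
assert (H2 : xB * (2 / xA) < 2).
{ apply (Rmult_lt_reg_l xA); [lra|]. field_simplify; lra. }
split; [lra|]. assert (0 < xB * sigma (v ^ 2)) by (apply Rmult_lt_0_compat; lra). lra.
Qed.

Lemma is_derive_reduced_time (v : R) : xA * v ^ 2 < 1 ->
  is_derive reduced_time v
    (2 * xA * sqrt (sigma (v ^ 2)) + 2 * xB * v * kepler_time' (1 - xB * sigma (v ^ 2))).
Proof.
intros Hv.
change (2 * xA * sqrt (sigma (v ^ 2)) + 2 * xB * v * kepler_time' (1 - xB * sigma (v ^ 2)))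
  with (plus (2 * xA * sqrt (sigma (v ^ 2)))
          (scal (2 * xB * v) (kepler_time' (1 - xB * sigma (v ^ 2))))).
apply (is_derive_plus (fun t => PI + odd_time t) (fun t => kepler_time (1 - xB * sigma (t ^ 2)))).
- pose proof (is_derive_odd_time v Hv) as Hodd.
  auto_derive; [now exists (2 * xA * sqrt (sigma (v ^ 2))) |].
  replace (Derive (fun t : R => odd_time t) v) with (2 * xA * sqrt (sigma (v ^ 2)))
    by (symmetry; now apply is_derive_unique).
  ring.
- apply (is_derive_comp kepler_time (fun t => 1 - xB * sigma (t ^ 2))).
  + now apply is_derive_kepler_time, cos_anomaly_B_bounds.
  + unfold sigma. auto_derive; [easy | ring].
Qed.

Definition T_curv (v : R) : R :=
  kepler_scale (sigma (v ^ 2))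
  * (3 * reduced_time v / sigma (v ^ 2) + 2 * xB * kepler_time' (1 - xB * sigma (v ^ 2))).

Definition T_smooth' (v : R) : R := 2 * xA / sigma (v ^ 2) + v * T_curv v.

Lemma is_derive_T_smooth (v : R) : xA * v ^ 2 < 1 -> is_derive T_smooth v (T_smooth' v).
Proof.
intros Hv. pose proof (sigma_pos v Hv) as Hs.
assert (Hscale : is_derive (fun t => kepler_scale (sigma (t ^ 2))) v
                   (- (2 * v) * (- (3 / 2) * kepler_scale (sigma (v ^ 2)) / sigma (v ^ 2)))).
{ apply (is_derive_comp kepler_scale (fun t => sigma (t ^ 2))).
  - apply is_derive_kepler_scale. lra.
  - unfold sigma. auto_derive; [easy | ring]. }
pose proof (Derive.is_derive_mult _ _ v _ _ Hscale (is_derive_reduced_time v Hv)) as HT.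
unfold T_smooth.
replace (T_smooth' v) with
  (- (2 * v) * (- (3 / 2) * kepler_scale (sigma (v ^ 2)) / sigma (v ^ 2)) * reduced_time v
   + kepler_scale (sigma (v ^ 2))
     * (2 * xA * sqrt (sigma (v ^ 2)) + 2 * xB * v * kepler_time' (1 - xB * sigma (v ^ 2))));
  [exact HT|].
assert (Hq : sqrt (sigma (v ^ 2)) * sqrt (sigma (v ^ 2)) = sigma (v ^ 2)) by (apply sqrt_sqrt; lra).
assert (0 < sqrt (sigma (v ^ 2))) by (apply sqrt_lt_R0; lra).
unfold T_smooth', T_curv, kepler_scale. set (q := sqrt (sigma (v ^ 2))) in *. rewrite <- Hq.
field. lra.
Qed.

Lemma ex_derive_T_curv_0 : ex_derive T_curv 0.
Proof.
assert (H0 : xA * 0 ^ 2 < 1) by (ring_simplify; lra).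
pose proof (sigma_pos 0 H0) as Hs. pose proof (cos_anomaly_B_bounds 0 H0) as HyB.
assert (Hy : 0 < 1 - (1 - xB * sigma (0 ^ 2))²) by (unfold Rsqr; nra).
assert (Hsigma : forall u, ex_derive sigma u) by (intros; unfold sigma; auto_derive; easy).
unfold T_curv, kepler_time'. auto_derive.
replace (0 * (0 * 1)) with (0 ^ 2) by ring. unfold Rminus in *.
repeat split; auto.
- eexists. apply is_derive_kepler_scale. lra.
- eexists. now apply is_derive_reduced_time.
- lra.
- now apply Rgt_not_eq, sqrt_lt_R0.
Qed.

Lemma is_derive_T_smooth'_0 : is_derive T_smooth' 0 (T_curv 0).
Proof.
assert (H0 : xA * 0 ^ 2 < 1) by (ring_simplify; lra).
pose proof (sigma_pos 0 H0) as Hs.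
pose proof ex_derive_T_curv_0 as Hc.
unfold T_smooth', sigma in *. auto_derive.
- repeat split; auto. replace (0 * (0 * 1)) with 0 by ring. unfold Rdiv. lra.
- ring.
Qed.

(* [kepler_time'] blows up at [-1], the limit of its argument [1 - 2 xB/xA]
   as [xB -> xA], while the other term stays below [12 xA]. *)
Lemma T_curv_0_neg : xA - xA / 100 < xB -> T_curv 0 < 0.
Proof.
intros HB.
assert (H0 : xA * 0 ^ 2 < 1) by (ring_simplify; lra).
pose proof (cos_anomaly_B_bounds 0 H0) as HyB.
assert (Hsigma : sigma (0 ^ 2) = 2 / xA) by (unfold sigma; ring).
assert (Hscale : 0 < kepler_scale (2 / xA)).
{ assert (Hs : 0 < 2 / xA) by (apply Rdiv_lt_0_compat; lra).
  unfold kepler_scale. apply Rinv_0_lt_compat, Rmult_lt_0_compat; [lra | now apply sqrt_lt_R0]. }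
assert (Htime : reduced_time 0 <= 2 * PI).
{ unfold reduced_time. rewrite odd_time_0.
  pose proof (kepler_time_le_PI (1 - xB * sigma (0 ^ 2)) ltac:(lra)). lra. }
set (r := xB / xA).
assert (Hr : 99 / 100 < r < 1).
{ unfold r. split; apply (Rmult_lt_reg_r xA); try lra; field_simplify; lra. }
assert (Hy : 1 - xB * sigma (0 ^ 2) = 1 - 2 * r) by (rewrite Hsigma; unfold r; field; lra).
set (p := sqrt (1 - (1 - 2 * r)²)).
assert (Hp2 : p * p = 4 * r * (1 - r)) by (unfold p; rewrite sqrt_sqrt; unfold Rsqr; nra).
assert (Hp : 0 < p) by (unfold p; apply sqrt_lt_R0; unfold Rsqr; nra).
assert (Hp5 : p < 1 / 5) by nra.
assert (Hfirst : 3 * reduced_time 0 / (2 / xA) <= 12 * xA).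
{ pose proof PI_4. replace (3 * reduced_time 0 / (2 / xA)) with (3 / 2 * xA * reduced_time 0)
    by (field; lra). nra. }
assert (Hsecond : 2 * xB * kepler_time' (1 - 2 * r) < - 12 * xA).
{ unfold kepler_time'. fold p.
  replace (2 * xB * (- (1 - (1 - 2 * r)) / p)) with (- (4 * r * r * xA) / p)
    by (unfold r; field; lra).
  apply (Rmult_lt_reg_r p); [lra|].
  replace (- (4 * r * r * xA) / p * p) with (- (4 * r * r * xA)) by (field; lra).
  assert (12 * p < 4 * r * r) by nra. nra. }
assert (Hsum : 3 * reduced_time 0 / (2 / xA) + 2 * xB * kepler_time' (1 - 2 * r) < 0) by lra.
unfold T_curv. rewrite Hy, Hsigma.
nra.
Qed.

Lemma T_IR_derivative (v : R) :
  Rabs v < / (1 + xA) -> derivable_pt_lim (T_IR xA xB) v (T_smooth' v).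
Proof.
intros Hv. apply is_derive_Reals, is_derive_ext_loc with T_smooth.
- apply (locally_interval (- / (1 + xA)) (/ (1 + xA))); [apply Rabs_def2 in Hv; lra|].
  intros t Ht. symmetry. apply T_IR_eq_T_smooth, small_speed, Rabs_def1; lra.
- now apply is_derive_T_smooth, small_speed.
Qed.

End Arrival.

End Kepler.

Theorem proposition7 (xA : R) (hxA : 0 < xA) :
  exists delta : R, 0 < delta /\
    forall xB : R, 0 < xB -> xA - delta < xB < xA ->
      (* T_I^R is not convex on ]-oo, v_E[ *)
      ~ (forall v1 v2 s : R, v1 < v_escape xA -> v2 < v_escape xA ->
           0 <= s <= 1 ->
           T_IR xA xB (s * v1 + (1 - s) * v2)
             <= s * T_IR xA xB v1 + (1 - s) * T_IR xA xB v2) /\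
      (* more precisely, d^2 T_I^R / d vA^2 < 0 at vA = 0 *)
      (exists (d1 : R -> R) (eps : R), 0 < eps /\
         (forall v : R, Rabs v < eps -> derivable_pt_lim (T_IR xA xB) v (d1 v)) /\
         exists d2 : R, derivable_pt_lim d1 0 d2 /\ d2 < 0).
Proof.
exists (xA / 100). split; [lra|]. intros xB HxB HAB.
assert (HxB' : 0 < xB < xA) by lra.
set (eps := / (1 + xA)).
assert (Heps : 0 < eps) by (apply Rinv_0_lt_compat; lra).
pose proof (T_IR_derivative xA hxA xB HxB') as Hd1.
assert (Hd2 : derivable_pt_lim (T_smooth' xA xB) 0 (T_curv xA xB 0))
  by now apply is_derive_Reals, is_derive_T_smooth'_0.
pose proof (T_curv_0_neg xA hxA xB HxB' (proj1 HAB)) as Hneg.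
split.
- refine (not_convex_of_second_derivative_neg _ (T_smooth' xA xB) _ 0 eps _ Heps _ Hd2 Hneg).
  intros v Hv. rewrite Rplus_0_l in Hv.
  assert (Habs : Rabs v < eps) by (rewrite Rabs_pos_eq; lra).
  split; [apply lt_v_escape, small_speed; tauto | now apply Hd1].
- exists (T_smooth' xA xB), eps. split; [exact Heps|]. split; [exact Hd1|].
  exists (T_curv xA xB 0). now split.
Qed.
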